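(* Each of the following mixed extensions of $P_3$ is pseudo-cospectral with a graph in $\mathcal G''$ not isomorphic to it: (i) the mixed extension of type $(p,-q,p)$ is pseudo-cospectral with $K_p+CS_{p,2q}$, where $p\ge 2$, $q\ge 1$; (ii) the mixed extension of type $(p,(p-1)(p-2),p)$ is pseudo-cospectral with $K_{p(p-1)}+K_{p-1,p-1}$, where $p\ge 3$; (iii) the mixed extension of type $(p,q,p)$ is pseudo-cospectral with $K_p+CS_{p+q-1,r}$, where $p\ge 2$, $q\ge 1$ and $r=1+pq/(p+q-1)$ is an integer.
   Context: Let $P_3$ be the path with vertices $1,2,3$ and edges $\{1,2\},\{2,3\}$. For nonzero integers $t_1,t_2,t_3$, the mixed extension of $P_3$ of type $(t_1,t_2,t_3)$ is the graph whose vertex set is a disjoint union $V_1\cup V_2\cup V_3$ with $|V_i|=|t_i|$, where $V_i$ is a clique if $t_i>0$ and a coclique if $t_i<0$, every vertex of $V_2$ is adjacent to every vertex of $V_1\cup V_3$, and there are no edges between $V_1$ and $V_3$. $K_n$ denotes the complete graph, $K_{a,b}$ the complete bipartite graph, and $CS_{a,b}$ (complete split graph) denotes the complete graph $K_{a+b}$ from which the edges of a complete subgraph $K_b$ are deleted (so it has a clique of order $a$ and a coclique of order $b$, all joined). $G_1+G_2$ denotes the disjoint union. All spectra are adjacency spectra. $\mathcal G''$ is the class of graphs with no isolated vertices such that all but at most three adjacency eigenvalues are equal to $0$ or $-1$, and which have exactly two positive eigenvalues and exactly one eigenvalue less than $-1$. Every graph in $\mathcal G''$ on $n$ vertices has characteristic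 polynomial of the form $(x^3-bx^2-cx+d)(x+1)^b x^{n-b-3}$ with $b\ge 0$, $d>0$; two graphs in $\mathcal G''$ are called pseudo-cospectral if they have the same coefficients $b,c,d$, i.e. the same multiset of nonzero adjacency eigenvalues (possibly with different numbers of vertices). *)

From HB Require Import structures.
From mathcomp Require Import all_boot all_order all_algebra.
From mathcomp Require Import algC.
Set Implicit Arguments. Unset Strict Implicit. Unset Printing Implicit Defensive.
Import Order.TTheory GRing.Theory Num.Theory.
Local Open Scope ring_scope.

Record sgraph := SGraph {
  vert : finType;
  adj : rel vert;
  adj_sym : symmetric adj;
  adj_irr : irreflexive adj }.
Arguments adj : clear implicits.

Definition isomorphic (G H : sgraph) : Prop :=
  exists f : vert G -> vert H,
    bijective f /\ forall x y, adj H (f x) (f y) = adj G x y.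

Definition adjmx (G : sgraph) : 'M[algC]_#|vert G| :=
  \matrix_(i, j) (adj G (enum_val i) (enum_val j))%:R.

Definition spectrum (G : sgraph) (rs : seq algC) : Prop :=
  char_poly (adjmx G) = \prod_(z <- rs) ('X - z%:P).

Definition in_Gpp (G : sgraph) : Prop :=
  (forall x : vert G, exists y, adj G x y) /\
  exists rs, [/\ spectrum G rs,
     leq (count (fun z => (z != 0) && (z != -1)) rs) 3,
     count (fun z => 0 < z) rs = 2%N &
     count (fun z => z < -1) rs = 1%N].

Definition pseudo_cospectral (G H : sgraph) : Prop :=
  [/\ in_Gpp G, in_Gpp H &
   exists rs1 rs2, [/\ spectrum G rs1, spectrum H rs2 &
      perm_eq [seq z <- rs1 | z != 0] [seq z <- rs2 | z != 0]]].

Definition K_adj n : rel 'I_n := fun i j => i != j.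
Lemma K_sym n : symmetric (@K_adj n). Proof. by move=> i j; rewrite /K_adj eq_sym. Qed.
Lemma K_irr n : irreflexive (@K_adj n). Proof. by move=> i; rewrite /K_adj eqxx. Qed.
Definition K n := SGraph (@K_sym n) (@K_irr n).

Definition Kb_adj a b : rel ('I_a + 'I_b)%type := fun x y =>
  match x, y with inl _, inr _ | inr _, inl _ => true | _, _ => false end.
Lemma Kb_sym a b : symmetric (@Kb_adj a b). Proof. by case=> i; case. Qed.
Lemma Kb_irr a b : irreflexive (@Kb_adj a b). Proof. by case. Qed.
Definition Kb a b := SGraph (@Kb_sym a b) (@Kb_irr a b).

Definition CS_adj a b : rel ('I_a + 'I_b)%type := fun x y =>
  match x, y with
  | inl i, inl j => i != j
  | inl _, inr _ | inr _, inl _ => true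
  | inr _, inr _ => false end.
Lemma CS_sym a b : symmetric (@CS_adj a b).
Proof. by case=> i; case=> j //=; rewrite eq_sym. Qed.
Lemma CS_irr a b : irreflexive (@CS_adj a b). Proof. by case=> i //=; rewrite eqxx. Qed.
Definition CS a b := SGraph (@CS_sym a b) (@CS_irr a b).

Definition dunion_adj (G H : sgraph) : rel (vert G + vert H)%type := fun x y =>
  match x, y with
  | inl i, inl j => adj G i j
  | inr i, inr j => adj H i j
  | _, _ => false end.
Lemma dunion_sym G H : symmetric (@dunion_adj G H).
Proof. by case=> i; case=> j //=; rewrite adj_sym. Qed.
Lemma dunion_irr G H : irreflexive (@dunion_adj G H).
Proof. by case=> i //=; rewrite adj_irr. Qed.
Definition dunion G H := SGraph (@dunion_sym G H) (@dunion_irr G H).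

(* mixed extension of P_3 of type (t1,t2,t3): V_i has |t_i| vertices,
   clique if t_i > 0, coclique if t_i < 0; V_2 joined to V_1 and V_3;
   no edges between V_1 and V_3. *)
Definition mext_adj (t1 t2 t3 : int) :
  rel ('I_(absz t1) + 'I_(absz t2) + 'I_(absz t3))%type := fun x y =>
  match x, y with
  | inl (inl i), inl (inl j) => (0 < t1) && (i != j)
  | inl (inr i), inl (inr j) => (0 < t2) && (i != j)
  | inr i, inr j => (0 < t3) && (i != j)
  | inl (inr _), _ => true
  | _, inl (inr _) => true
  | _, _ => false
  end.
Lemma mext_sym t1 t2 t3 : symmetric (@mext_adj t1 t2 t3).
Proof. by case=> [[i|i]|i] [[j|j]|j] //=; rewrite eq_sym. Qed.
Lemma mext_irr t1 t2 t3 : irreflexive (@mext_adj t1 t2 t3).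
Proof. by case=> [[i|i]|i] //=; rewrite eqxx andbF. Qed.
Definition mixed_ext t1 t2 t3 := SGraph (@mext_sym t1 t2 t3) (@mext_irr t1 t2 t3).

From HB Require Import structures.
From mathcomp Require Import all_boot all_order all_algebra.
From mathcomp Require Import algC.
From mathcomp Require Import ring zify.
Set Implicit Arguments. Unset Strict Implicit. Unset Printing Implicit Defensive.
Import Order.TTheory GRing.Theory Num.Theory.
Local Open Scope ring_scope.

(* Each graph involved is the blow-up of a pattern on three cells: every cell
   is a clique or a coclique, and two cells are either completely joined or
   not joined at all.  A clique cell of size n contributes the eigenvalue -1,
   and a coclique cell the eigenvalue 0, with multiplicity n - 1; the other
   eigenvalues are those of the 3x3 quotient matrix of the partition.  In each
   pair both quotient characteristic polynomials equal (x - mu)(x^2 - s x - t)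
   with mu > 0 and t > s + 1, so both graphs have the nonzero spectrum
   {-1^a, mu, r1, r2} with r1 > 0 and r2 < -1; their orders differ, so they
   are not isomorphic. *)

Lemma det_1_sub_mulmxC (R : comNzRingType) m n (P : 'M[R]_(m, n)) (Q : 'M[R]_(n, m)) :
  \det (1%:M - P *m Q) = \det (1%:M - Q *m P).
Proof.
pose B := block_mx (1%:M : 'M[R]_m) P Q (1%:M : 'M[R]_n).
have eBr : B *m block_mx 1%:M (- P) 0 1%:M = block_mx 1%:M 0 Q (1%:M - Q *m P).
  by rewrite mulmx_block !mulmx1 !mul1mx !mulmx0 !addr0 mulmxN addrC subrr addrC.
have eBl : block_mx 1%:M (- P) 0 1%:M *m B = block_mx (1%:M - P *m Q) 0 Q 1%:M.
  by rewrite mulmx_block !mulmx1 !mul1mx !mul0mx !add0r mulNmx subrr addrC.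
have := congr1 determinant eBr; have := congr1 determinant eBl.
rewrite !det_mulmx !det_lblock !det_ublock !det1 !mul1r !mulr1.
by move=> <- ->.
Qed.

Lemma horner_char_poly (R : comNzRingType) n (M : 'M[R]_n) x :
  (char_poly M).[x] = \det (x%:M - M).
Proof.
rewrite /char_poly -[LHS]/(horner_eval x _) -det_map_mx; congr (\det _).
apply/matrixP => i j; rewrite !mxE /horner_eval.
rewrite -[LHS]/(('X *+ (i == j) - (M i j)%:P).[x]).
by rewrite hornerD hornerN hornerC hornerMn hornerX.
Qed.

Lemma eq_poly_pnat (R : numDomainType) (p q : {poly R}) :
  (forall i : nat, p.[i.+1%:R] = q.[i.+1%:R]) -> p = q.
Proof.
move=> epq; apply/eqP; rewrite -subr_eq0; apply/negPn/negP => pq_neq0.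
pose rs : seq R := [seq i.+1%:R | i <- iota 0 (size (p - q))].
have rs_roots : all (root (p - q)) rs.
  by apply/allP => _ /mapP [i _ ->]; rewrite /root hornerD hornerN epq subrr.
have rs_uniq : uniq rs.
  by rewrite map_inj_uniq ?iota_uniq // => i j /eqP; rewrite eqr_nat eqSS => /eqP.
by have := max_poly_roots pq_neq0 rs_roots rs_uniq; rewrite size_map size_iota ltnn.
Qed.

Lemma det_mx33 (R : comNzRingType) (M : 'M[R]_3) :
  \det M = M 0 0 * (M 1 1 * M 2 2 - M 1 2 * M 2 1)
         - M 0 1 * (M 1 0 * M 2 2 - M 1 2 * M 2 0)
         + M 0 2 * (M 1 0 * M 2 1 - M 1 1 * M 2 0).
Proof.
pose f a b := M (inord a) (inord b).
have -> : M = \matrix_(i, j) f (val i) (val j).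
  by apply/matrixP => i j; rewrite mxE /f !inord_val.
rewrite (expand_det_row _ 0) !big_ord_recl big_ord0 /cofactor.
rewrite !(expand_det_row _ 0) !big_ord_recl !big_ord0 /cofactor !det_mx11 !mxE /=.
by rewrite !expr0 !expr1 ?expr2; ring.
Qed.

Definition cell_size (T : finType) k (cell : T -> 'I_k) (c : 'I_k) : nat :=
  #|[pred v | cell v == c]|.

Section BlowupDeterminant.
Variables (R : fieldType) (T : finType) (k : nat) (cell : T -> 'I_k).
Variables (C : 'M[R]_k) (eps : 'I_k -> R).
Local Notation n := (cell_size cell).

Definition blowup_mx : 'M[R]_#|T| :=
  \matrix_(i, j) (C (cell (enum_val i)) (cell (enum_val j))
                  - (i == j)%:R * eps (cell (enum_val i))).

Definition cell_mx : 'M[R]_(#|T|, k) := \matrix_(i, c) (cell (enum_val i) == c)%:R.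

Lemma cell_mx_mul_trmx : cell_mx *m C *m cell_mx^T =
  \matrix_(i, j) C (cell (enum_val i)) (cell (enum_val j)).
Proof.
apply/matrixP => i j; rewrite !mxE (bigD1 (cell (enum_val j))) //=.
rewrite big1 => [|c /negbTE c_neq]; last by rewrite !mxE eq_sym c_neq mulr0.
rewrite !mxE eqxx mulr1 addr0 (bigD1 (cell (enum_val i))) //=.
rewrite big1 => [|c /negbTE c_neq]; last by rewrite !mxE eq_sym c_neq mul0r.
by rewrite !mxE eqxx mul1r addr0.
Qed.

Lemma trmx_cell_mx_mul_diag (w : 'I_k -> R) :
  cell_mx^T *m (diag_mx (\row_i w (cell (enum_val i))) *m cell_mx) =
  diag_mx (\row_c ((n c)%:R * w c)).
Proof.
rewrite mul_diag_mx; apply/matrixP => a b; rewrite !mxE.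
under eq_bigr do rewrite !mxE.
rewrite -(big_enum_val (fun v => (cell v == a)%:R * (w (cell v) * (cell v == b)%:R))) /=.
have [<-|/negbTE a_neq_b] := eqVneq a b; last first.
  rewrite mulr0n big1 // => v _.
  by case: eqP => [->|_]; rewrite ?a_neq_b ?mulr0 ?mul0r.
rewrite mulr1n (bigID (fun v => cell v == a)) /= [X in _ + X]big1 ?addr0; last first.
  by move=> v /negbTE ->; rewrite mul0r.
rewrite (eq_bigr (fun _ => w a)) => [|v /eqP ->]; last by rewrite eqxx mulr1 mul1r.
by rewrite sumr_const mulr_natl; congr (_ *+ _); apply: eq_card => v; rewrite !inE.
Qed.

Lemma det_blowup x : (forall c, x + eps c != 0) ->
  \det (x%:M - blowup_mx) =
  \prod_c (x + eps c) ^+ n c * \det (1%:M - C *m diag_mx (\row_c ((n c)%:R / (x + eps c)))).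
Proof.
(* With D = diag (x + eps (cell v)) we have x - blowup_mx = D (1 - D^-1 U C U^T)
   for U = cell_mx, and Sylvester's identity turns the second factor into a
   k x k determinant. *)
move=> x_eps_neq0.
pose d := \row_i (x + eps (cell (enum_val i))) : 'rV_#|T|.
pose d' := \row_i (x + eps (cell (enum_val i)))^-1 : 'rV_#|T|.
have dd' : diag_mx d *m diag_mx d' = 1%:M.
  rewrite mulmx_diag; apply/matrixP => i j; rewrite !mxE.
  by case: eqP => [->|_]; rewrite ?mulr1n ?mulr0n // mulfV.
have -> : x%:M - blowup_mx =
          diag_mx d *m (1%:M - (diag_mx d' *m cell_mx) *m (C *m cell_mx^T)).
  rewrite mulmxBr mulmx1 !mulmxA dd' mul1mx cell_mx_mul_trmx.
  apply/matrixP => i j; rewrite !mxE.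
  by case: eqP => _; rewrite ?mulr1n ?mulr0n ?mul1r ?mul0r; ring.
rewrite det_mulmx det_1_sub_mulmxC -mulmxA (trmx_cell_mx_mul_diag (fun c => (x + eps c)^-1)).
congr (_ * _); rewrite det_diag; under eq_bigr do rewrite mxE.
rewrite -(big_enum_val (fun v => x + eps (cell v))) /= (partition_big cell xpredT) //=.
apply: eq_bigr => c _; rewrite (eq_bigr (fun _ => x + eps c)) => [|v /eqP -> //].
by rewrite prodr_const; congr (_ ^+ _); apply: eq_card => v; rewrite !inE.
Qed.

Lemma det_blowup_quotient x : (forall c, x + eps c != 0) -> (forall c, 0 < n c)%N ->
  \det (x%:M - blowup_mx) = \prod_c (x + eps c) ^+ (n c).-1 *
    \det (x%:M - (C *m diag_mx (\row_c (n c)%:R) - diag_mx (\row_c eps c))).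
Proof.
move=> x_eps_neq0 n_gt0; rewrite det_blowup //.
have -> : \prod_c (x + eps c) ^+ n c =
          \prod_c (x + eps c) ^+ (n c).-1 * \det (diag_mx (\row_c (x + eps c))).
  rewrite det_diag -big_split; apply: eq_bigr => c _.
  by rewrite mxE /= -exprSr prednK.
rewrite -mulrA; congr (_ * _); rewrite mulrC -det_mulmx; congr (\det _).
rewrite mulmxBl mul1mx !mul_mx_diag; apply/matrixP => a b; rewrite !mxE.
by case: eqP => _; rewrite ?mulr1n ?mulr0n -mulrA divfK //; ring.
Qed.

End BlowupDeterminant.

Definition blowup (G : sgraph) k (cell : vert G -> 'I_k) (B : rel 'I_k) : Prop :=
  forall v w, adj G v w = (v != w) && B (cell v) (cell w).

(* Entry (c, d) counts the neighbours in cell d of any vertex of cell c. *)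
Definition quotient_mx k (B : rel 'I_k) (n : 'I_k -> nat) : 'M[algC]_k :=
  \matrix_(c, d) (B c d * (n d - (c == d)))%:R.

Lemma char_poly_blowup (G : sgraph) k (cell : vert G -> 'I_k) B n :
  blowup cell B -> (forall c, cell_size cell c = n c) -> (forall c, 0 < n c)%N ->
  char_poly (adjmx G) =
  \prod_c ('X + (B c c)%:R) ^+ (n c).-1 * char_poly (quotient_mx B n).
Proof.
(* At x = i + 1 no x + (B c c)%:R vanishes, so det_blowup_quotient applies. *)
move=> G_blowup n_cell n_gt0; apply: eq_poly_pnat => i.
pose C : 'M[algC]_k := \matrix_(c, d) (B c d)%:R.
pose eps c : algC := (B c c)%:R.
have -> : adjmx G = blowup_mx cell C eps.
  apply/matrixP => v w; rewrite !mxE G_blowup (inj_eq enum_val_inj).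
  have [->|v_neq_w] := eqVneq v w; first by rewrite mul1r subrr.
  by rewrite mul0r subr0.
have -> : quotient_mx B n =
          C *m diag_mx (\row_c (cell_size cell c)%:R) - diag_mx (\row_c eps c).
  apply/matrixP => c d; rewrite mul_mx_diag !mxE n_cell.
  case: eqP => [->|_]; rewrite ?mulr1n ?mulr0n ?subr0 ?subn0 ?natrM //.
  by rewrite natrB ?n_gt0 // mulrBr mulr1.
have i_eps_neq0 c : i.+1%:R + eps c != 0 by rewrite -natrD pnatr_eq0 addSn.
rewrite hornerM horner_prod !horner_char_poly det_blowup_quotient //; last first.
  by move=> c; rewrite n_cell.
congr (_ * _); apply: eq_bigr => c _.
by rewrite horner_exp hornerD hornerX -polyC_natr hornerC n_cell.
Qed.

Definition of3 {T : Type} (a b c : T) (i : 'I_3) : T :=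
  match val i with 0 => a | 1 => b | _ => c end.

Definition cell3l a b c (v : 'I_a + 'I_b + 'I_c) : 'I_3 :=
  match v with inl (inl _) => 0 | inl (inr _) => 1 | inr _ => 2 end.

Definition cell3r a b c (v : 'I_a + ('I_b + 'I_c)) : 'I_3 :=
  match v with inl _ => 0 | inr (inl _) => 1 | inr (inr _) => 2 end.

Lemma sum1_const n (b : bool) : (\sum_(i < n | b) 1 = b * n)%N.
Proof. by case: b; rewrite ?big_pred0_eq // sum1_card card_ord mul1n. Qed.

Lemma cell_size_cell3l a b c i : cell_size (@cell3l a b c) i = of3 a b c i.
Proof.
rewrite /cell_size -!sum1_card !big_sumType /=.
by case: i => [[|[|[|i]]] lt_i] //=; rewrite !sum1_const /of3 /=; lia.
Qed.

Lemma cell_size_cell3r a b c i : cell_size (@cell3r a b c) i = of3 a b c i.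
Proof.
rewrite /cell_size -!sum1_card !big_sumType /=.
by case: i => [[|[|[|i]]] lt_i] //=; rewrite !sum1_const /of3 /=; lia.
Qed.

Definition P3_pattern (l0 l1 l2 : bool) : rel 'I_3 :=
  fun c d => if c == d then of3 l0 l1 l2 c else (c == 1) || (d == 1).

Definition K1_K2_pattern (l1 l2 : bool) : rel 'I_3 :=
  fun c d => if c == d then of3 true l1 l2 c else (c != 0) && (d != 0).

Lemma blowup_mixed_ext t1 t2 t3 :
  blowup (G := mixed_ext t1 t2 t3) (@cell3l _ _ _) (P3_pattern (0 < t1) (0 < t2) (0 < t3)).
Proof.
by case=> [[i|i]|i] [[j|j]|j]; rewrite /P3_pattern /of3 //= andbC.
Qed.

Lemma blowup_K_CS p a b :
  blowup (G := dunion (K p) (CS a b)) (@cell3r _ _ _) (K1_K2_pattern true false).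
Proof.
by case=> [i|[i|i]] [j|[j|j]]; rewrite /K1_K2_pattern /of3 //= ?andbT ?andbF.
Qed.

Lemma blowup_K_Kb p a b :
  blowup (G := dunion (K p) (Kb a b)) (@cell3r _ _ _) (K1_K2_pattern false false).
Proof.
by case=> [i|[i|i]] [j|[j|j]]; rewrite /K1_K2_pattern /of3 //= ?andbT ?andbF.
Qed.

Lemma char_poly_P3_quotient l0 l1 l2 n0 n1 n2 :
  char_poly (quotient_mx (P3_pattern l0 l1 l2) (of3 n0 n1 n2)) =
  ('X - (l0 * n0.-1)%:R) * ('X - (l1 * n1.-1)%:R) * ('X - (l2 * n2.-1)%:R)
  - (n0 * n1)%:R * ('X - (l2 * n2.-1)%:R) - (n1 * n2)%:R * ('X - (l0 * n0.-1)%:R).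
Proof.
rewrite /char_poly det_mx33 /char_poly_mx !mxE /P3_pattern /of3 /=.
by rewrite !polyC_natr !subn1 !subn0; ring.
Qed.

Lemma char_poly_K1_K2_quotient l1 l2 n0 n1 n2 :
  char_poly (quotient_mx (K1_K2_pattern l1 l2) (of3 n0 n1 n2)) =
  ('X - n0.-1%:R) * (('X - (l1 * n1.-1)%:R) * ('X - (l2 * n2.-1)%:R) - (n1 * n2)%:R).
Proof.
rewrite /char_poly det_mx33 /char_poly_mx !mxE /K1_K2_pattern /of3 /=.
by rewrite !polyC_natr !subn1 !subn0; ring.
Qed.

Definition Gpp_spectrum (a b : nat) (mu r1 r2 : algC) : seq algC :=
  nseq a (-1) ++ nseq b 0 ++ [:: mu; r1; r2].

Lemma prod_XsubC_Gpp_spectrum a b mu r1 r2 :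
  \prod_(z <- Gpp_spectrum a b mu r1 r2) ('X - z%:P) =
  ('X + 1) ^+ a * 'X ^+ b * ('X - mu%:P) * ('X ^+ 2 - (r1 + r2)%:P * 'X + (r1 * r2)%:P).
Proof.
rewrite !big_cat !big_nseq !iter_mulr_1 !big_cons big_nil polyCN polyC1 opprK.
by rewrite polyC0 subr0 polyCD polyCM /=; ring.
Qed.

Lemma spectrum_mixed_ext_coclique p q (r1 r2 : algC) : (0 < p)%N -> (0 < q)%N ->
  r1 + r2 = p.-1%:R -> r1 * r2 = - (2 * p * q)%:R ->
  spectrum (mixed_ext p%:Z (- q%:Z) p%:Z) (Gpp_spectrum (p.-1 + p.-1) q.-1 p.-1%:R r1 r2).
Proof.
move=> p_gt0 q_gt0 r_sum r_prod.
have [p_pos q_npos] : (0 < p%:Z) = true /\ (0 < - q%:Z) = false.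
  by rewrite oppr_gt0 !ltz_nat.
rewrite /spectrum (char_poly_blowup (@blowup_mixed_ext _ _ _) (@cell_size_cell3l _ _ _));
  last first.
  by case=> [[|[|[|?]]] ?] //=; rewrite /of3 /= abszN.
rewrite char_poly_P3_quotient prod_XsubC_Gpp_spectrum r_sum r_prod !big_ord_recr big_ord0 /=.
rewrite /P3_pattern /of3 /= p_pos q_npos /= abszN mulr1n mulr0n addr0.
by rewrite polyCN !polyC_natr exprD; ring.
Qed.

Lemma spectrum_mixed_ext_clique p m (r1 r2 : algC) : (0 < p)%N -> (0 < m)%N ->
  r1 + r2 = (p.-1 + m.-1)%:R -> r1 * r2 = (p.-1 * m.-1)%:R - (2 * p * m)%:R ->
  spectrum (mixed_ext p%:Z m%:Z p%:Z) (Gpp_spectrum (p.-1 + m.-1 + p.-1) 0 p.-1%:R r1 r2).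
Proof.
move=> p_gt0 m_gt0 r_sum r_prod.
have [p_pos m_pos] : (0 < p%:Z) = true /\ (0 < m%:Z) = true by rewrite !ltz_nat.
rewrite /spectrum (char_poly_blowup (@blowup_mixed_ext _ _ _) (@cell_size_cell3l _ _ _));
  last first.
  by case=> [[|[|[|?]]] ?].
rewrite char_poly_P3_quotient prod_XsubC_Gpp_spectrum r_sum r_prod !big_ord_recr big_ord0 /=.
by rewrite /P3_pattern /of3 /= p_pos m_pos /= mulr1n polyCB !polyC_natr !exprD; ring.
Qed.

Lemma spectrum_K_CS p a b (r1 r2 : algC) : (0 < p)%N -> (0 < a)%N -> (0 < b)%N ->
  r1 + r2 = a.-1%:R -> r1 * r2 = - (a * b)%:R ->
  spectrum (dunion (K p) (CS a b)) (Gpp_spectrum (p.-1 + a.-1) b.-1 p.-1%:R r1 r2).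
Proof.
move=> p_gt0 a_gt0 b_gt0 r_sum r_prod.
rewrite /spectrum (char_poly_blowup (@blowup_K_CS _ _ _) (@cell_size_cell3r _ _ _));
  last first.
  by case=> [[|[|[|?]]] ?].
rewrite char_poly_K1_K2_quotient prod_XsubC_Gpp_spectrum r_sum r_prod !big_ord_recr big_ord0 /=.
by rewrite /K1_K2_pattern /of3 /= mulr1n mulr0n addr0 polyCN !polyC_natr !exprD; ring.
Qed.

Lemma spectrum_K_Kb n a : (0 < n)%N -> (0 < a)%N ->
  spectrum (dunion (K n) (Kb a a)) (Gpp_spectrum n.-1 (a.-1 + a.-1) a%:R n.-1%:R (- a%:R)).
Proof.
move=> n_gt0 a_gt0.
rewrite /spectrum (char_poly_blowup (@blowup_K_Kb _ _ _) (@cell_size_cell3r _ _ _));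
  last first.
  by case=> [[|[|[|?]]] ?].
rewrite char_poly_K1_K2_quotient prod_XsubC_Gpp_spectrum !big_ord_recr big_ord0 /=.
rewrite /K1_K2_pattern /of3 /= mulr1n mulr0n addr0.
by rewrite polyCD polyCM polyCN !polyC_natr !exprD; ring.
Qed.

Definition isolated_free (G : sgraph) : Prop := forall x : vert G, exists y, adj G x y.

Lemma in_Gpp_Gpp_spectrum (G : sgraph) a b (mu r1 r2 : algC) :
  isolated_free G -> spectrum G (Gpp_spectrum a b mu r1 r2) ->
  0 < mu -> 0 < r1 -> r2 < -1 -> in_Gpp G.
Proof.
move=> G_free G_spec mu_gt0 r1_gt0 r2_ltN1; split => //.
have r2_lt0 : r2 < 0 := lt_trans r2_ltN1 (ltrN10 _).
have gt0_ltN1F (x : algC) : 0 < x -> x < -1 = false.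
  by move=> x_gt0; rewrite lt_gtF // (lt_trans (ltrN10 _)).
exists (Gpp_spectrum a b mu r1 r2); split => //; rewrite !count_cat !count_nseq.
- by rewrite /= !eqxx andbF !mul0n; lia.
- by rewrite /= (lt_gtF (ltrN10 _)) ltxx mu_gt0 r1_gt0 (lt_gtF r2_lt0).
- by rewrite /= ltxx (lt_gtF (ltrN10 _)) (gt0_ltN1F _ mu_gt0) (gt0_ltN1F _ r1_gt0) r2_ltN1.
Qed.

Lemma pseudo_cospectral_Gpp_spectrum (G H : sgraph) a bG bH (mu r1 r2 : algC) :
  isolated_free G -> isolated_free H ->
  spectrum G (Gpp_spectrum a bG mu r1 r2) -> spectrum H (Gpp_spectrum a bH mu r1 r2) ->
  0 < mu -> 0 < r1 -> r2 < -1 -> pseudo_cospectral G H.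
Proof.
move=> G_free H_free G_spec H_spec mu_gt0 r1_gt0 r2_ltN1.
split; [exact: (in_Gpp_Gpp_spectrum G_free G_spec) |
        exact: (in_Gpp_Gpp_spectrum H_free H_spec) |].
exists (Gpp_spectrum a bG mu r1 r2), (Gpp_spectrum a bH mu r1 r2); split => //.
by rewrite !filter_cat !filter_nseq /= eqxx !mul0n.
Qed.

Lemma isolated_free_dunion G H :
  isolated_free G -> isolated_free H -> isolated_free (dunion G H).
Proof.
move=> G_free H_free [x|x].
- by have [y] := G_free x; exists (inl y).
- by have [y] := H_free x; exists (inr y).
Qed.

Lemma isolated_free_K n : (1 < n)%N -> isolated_free (K n).
Proof.
move=> n_gt1 i; have [i0|i_neq0] := eqVneq (val i) 0.
- by exists (Ordinal n_gt1); rewrite /= /K_adj -val_eqE /= i0.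
- by exists (Ordinal (ltn_trans (ltnSn 0) n_gt1)); rewrite /= /K_adj -val_eqE.
Qed.

Lemma isolated_free_CS a b : (0 < a)%N -> (0 < b)%N -> isolated_free (CS a b).
Proof.
by move=> a_gt0 b_gt0 [i|i]; [exists (inr (Ordinal b_gt0)) | exists (inl (Ordinal a_gt0))].
Qed.

Lemma isolated_free_Kb a b : (0 < a)%N -> (0 < b)%N -> isolated_free (Kb a b).
Proof.
by move=> a_gt0 b_gt0 [i|i]; [exists (inr (Ordinal b_gt0)) | exists (inl (Ordinal a_gt0))].
Qed.

Lemma isolated_free_mixed_ext t1 t2 t3 :
  (0 < `|t1|)%N -> (0 < `|t2|)%N -> isolated_free (mixed_ext t1 t2 t3).
Proof.
move=> t1_neq0 t2_neq0 [[i|i]|i]; last by exists (inl (inr (Ordinal t2_neq0))).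
- by exists (inl (inr (Ordinal t2_neq0))).
- by exists (inl (inl (Ordinal t1_neq0))).
Qed.

Lemma isomorphic_card G H : isomorphic G H -> #|vert G| = #|vert H|.
Proof. by case=> f [f_bij _]; apply: bij_eq_card f_bij. Qed.

Lemma quadratic_roots_gt0_ltN1 (S T : nat) : (S.+1 < T)%N ->
  exists r1 r2 : algC, [/\ r1 + r2 = S%:R, r1 * r2 = - T%:R, 0 < r1 & r2 < -1].
Proof.
move=> ST.
pose w : algC := sqrtC (S ^ 2 + 4 * T)%:R.
have w2 : w ^+ 2 = (S ^ 2 + 4 * T)%:R by rewrite sqrtCK.
have S2_lt_w : S%:R + 2 < w.
  have -> : S%:R + 2 = sqrtC ((S + 2) ^ 2)%:R :> algC by rewrite natrX sqrCK ?ler0n // natrD.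
  by rewrite ltr_sqrtC ?qualifE /= ?ler0n // ltr_nat; nia.
exists ((S%:R + w) / 2), ((S%:R - w) / 2); split.
- by field.
- transitivity ((S%:R ^+ 2 - w ^+ 2) / 4 : algC); first by field.
  by rewrite w2 natrD natrM natrX; field.
- by rewrite divr_gt0 ?ltr0n // ltr_wpDl ?ler0n // (le_lt_trans _ S2_lt_w) ?addr_ge0 ?ler0n.
- rewrite -subr_gt0 (_ : -1 - _ = (w - (S%:R + 2)) / 2); last by field.
  by rewrite divr_gt0 ?subr_gt0 ?ltr0n.
Qed.

Lemma pseudo_cospectral_mixed_ext_N_K_CS p q : (2 <= p)%N -> (1 <= q)%N ->
  pseudo_cospectral (mixed_ext p%:Z (- q%:Z) p%:Z) (dunion (K p) (CS p (2 * q)))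
  /\ ~ isomorphic (mixed_ext p%:Z (- q%:Z) p%:Z) (dunion (K p) (CS p (2 * q))).
Proof.
move=> p_ge2 q_ge1; split; last first.
  by move/isomorphic_card; rewrite /= !card_sum !card_ord abszN; lia.
have [|r1 [r2 [r_sum r_prod r1_gt0 r2_ltN1]]] := @quadratic_roots_gt0_ltN1 p.-1 (2 * p * q).
  by nia.
apply: (pseudo_cospectral_Gpp_spectrum _ _ (spectrum_mixed_ext_coclique _ _ r_sum r_prod)
          (spectrum_K_CS _ _ _ r_sum _)) => //; try lia.
- by apply: isolated_free_mixed_ext; rewrite ?abszN /=; lia.
- by apply: isolated_free_dunion; [apply: isolated_free_K | apply: isolated_free_CS]; lia.
- by rewrite r_prod mulnCA mulnA.
- by rewrite ltr0n; lia.
Qed.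

Lemma pseudo_cospectral_mixed_ext_K_Kb p : (3 <= p)%N ->
  pseudo_cospectral (mixed_ext p%:Z ((p - 1) * (p - 2))%N%:Z p%:Z)
                    (dunion (K (p * (p - 1))) (Kb (p - 1) (p - 1)))
  /\ ~ isomorphic (mixed_ext p%:Z ((p - 1) * (p - 2))%N%:Z p%:Z)
                  (dunion (K (p * (p - 1))) (Kb (p - 1) (p - 1))).
Proof.
case: p => [|[|[|p]]] // _; rewrite !subSS !subn0.
split; last by move/isomorphic_card; rewrite /= !card_sum !card_ord; nia.
have [N_pred m_pred] : ((p.+3 * p.+2).-1 = p * p + 5 * p + 5)%N /\
                       ((p.+2 * p.+1).-1 = p * p + 3 * p + 1)%N by split; nia.
have G_spec := @spectrum_mixed_ext_clique p.+3 (p.+2 * p.+1) (p.+3 * p.+2).-1%:R (- p.+2%:R).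
rewrite (_ : (p.+3.-1 + _ + p.+3.-1 = (p.+3 * p.+2).-1)%N) in G_spec; last by nia.
apply: (pseudo_cospectral_Gpp_spectrum _ _ (G_spec _ _ _ _) (spectrum_K_Kb _ _)) => //.
- by apply: isolated_free_mixed_ext.
- by apply: isolated_free_dunion; [apply: isolated_free_K | apply: isolated_free_Kb]; nia.
- by rewrite N_pred m_pred /=; ring.
- by rewrite N_pred m_pred /=; ring.
- by rewrite ltrN2 ltr1n.
Qed.

Lemma pseudo_cospectral_mixed_ext_K_CS p q r : (2 <= p)%N -> (1 <= q)%N ->
  (r * (p + q - 1) = (p + q - 1) + p * q)%N ->
  pseudo_cospectral (mixed_ext p%:Z q%:Z p%:Z) (dunion (K p) (CS (p + q - 1) r))
  /\ ~ isomorphic (mixed_ext p%:Z q%:Z p%:Z) (dunion (K p) (CS (p + q - 1) r)).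
Proof.
move=> p_ge2 q_ge1 r_def.
have r_gt1 : (1 < r)%N by nia.
split; last by move/isomorphic_card; rewrite /= !card_sum !card_ord; lia.
have [|r1 [r2 [r_sum r_prod r1_gt0 r2_ltN1]]] :=
  @quadratic_roots_gt0_ltN1 (p.-1 + q.-1) ((p + q - 1) * r); first by nia.
have H_spec := @spectrum_K_CS p (p + q - 1) r r1 r2.
rewrite (_ : (p.-1 + (p + q - 1).-1 = p.-1 + q.-1 + p.-1)%N) in H_spec; last by lia.
apply: (pseudo_cospectral_Gpp_spectrum _ _ (spectrum_mixed_ext_clique _ _ r_sum _)
                                       (H_spec _ _ _ _ r_prod)) => //; try lia.
- by apply: isolated_free_mixed_ext => /=; lia.
- by apply: isolated_free_dunion; [apply: isolated_free_K | apply: isolated_free_CS]; lia.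
- rewrite r_prod -(_ : (p.-1 * q.-1 + (p + q - 1) * r = 2 * p * q)%N); last by nia.
  by rewrite natrD; ring.
- by rewrite r_sum; congr (_%:R); lia.
- by rewrite ltr0n; lia.
Qed.

Theorem proposition2 :
  (* (i) *)
  (forall p q : nat, (2 <= p)%N -> (1 <= q)%N ->
     pseudo_cospectral (mixed_ext p%:Z (- q%:Z) p%:Z) (dunion (K p) (CS p (2 * q)))
     /\ ~ isomorphic (mixed_ext p%:Z (- q%:Z) p%:Z) (dunion (K p) (CS p (2 * q)))) /\
  (* (ii) *)
  (forall p : nat, (3 <= p)%N ->
     pseudo_cospectral (mixed_ext p%:Z ((p - 1) * (p - 2))%N%:Z p%:Z)
                       (dunion (K (p * (p - 1))) (Kb (p - 1) (p - 1)))
     /\ ~ isomorphic (mixed_ext p%:Z ((p - 1) * (p - 2))%N%:Z p%:Z)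
                       (dunion (K (p * (p - 1))) (Kb (p - 1) (p - 1)))) /\
  (* (iii) *)
  (forall p q r : nat, (2 <= p)%N -> (1 <= q)%N ->
     (r * (p + q - 1) = (p + q - 1) + p * q)%N ->
     pseudo_cospectral (mixed_ext p%:Z q%:Z p%:Z) (dunion (K p) (CS (p + q - 1) r))
     /\ ~ isomorphic (mixed_ext p%:Z q%:Z p%:Z) (dunion (K p) (CS (p + q - 1) r))).
Proof.
split; first exact: pseudo_cospectral_mixed_ext_N_K_CS.
split; first exact: pseudo_cospectral_mixed_ext_K_Kb.
exact: pseudo_cospectral_mixed_ext_K_CS.
Qed.
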